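(* For any odd prime $p$, the Laurent series $\Theta_p(t)\in\mathbb{F}_p(\!(t^{-1})\!)$ is a quadratic irrational.
   Context: The $p$-Cantor sequence: for an odd prime $p$, $p_2=\frac{p-1}{2}$, identify $\{0,\dots,p-1\}$ with $\mathbb{F}_p$ and let $\phi_p(n)$ be the word of length $p$ whose $i$-th letter ($0\le i\le p-1$) is $n\binom{p_2}{i/2}\bmod p$ for even $i$ and $0$ for odd $i$; $\phi_p$ acts on words by concatenation. $(c^{(p)}_i)_{i\ge0}=\lim_n\phi_p^n(1)$ and $\Theta_p(t)=t^{-1}\sum_{i\ge0}c^{(p)}_it^{-i}$. A quadratic irrational is a Laurent series not in $\mathbb{F}_p(t)$ that satisfies a quadratic equation with coefficients in $\mathbb{F}_p[t]$. *)

From HB Require Import structures.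
From mathcomp Require Import all_boot all_order all_algebra.
Set Implicit Arguments. Unset Strict Implicit. Unset Printing Implicit Defensive.
Import Order.TTheory GRing.Theory Num.Theory.
Local Open Scope ring_scope.

(* Laurent series in t^{-1} with no positive powers of t are represented by
   s : nat -> F, meaning  sum_{m >= 0} s m * t^{-m}. *)

Definition smul (F : nzRingType) (s u : nat -> F) : nat -> F :=
  fun m => \sum_(i < m.+1) s i * u (m - i)%N.

Definition pcoef (F : nzRingType) (P : {poly F}) (k : int) : F :=
  match k with Posz n => P`_n | Negz _ => 0 end.

(* Coefficient of t^k (k : int) of the Laurent series P(t) * s, where
   P in F[t] and s = sum_m s m t^{-m}:  sum_j P_j s_{j-k}. *)
Definition pmul_series (F : nzRingType) (P : {poly F}) (s : nat -> F) (k : int) : F :=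
  \sum_(j < size P) P`_j * (if k <= (j : int) then s `|(j : int) - k|%N else 0).

Definition is_rational_series (F : fieldType) (s : nat -> F) : Prop :=
  exists (P Q : {poly F}), Q != 0 /\ forall k : int, pmul_series Q s k = pcoef P k.

Definition quadratic_irrational (F : fieldType) (s : nat -> F) : Prop :=
  ~ is_rational_series s /\
  exists (A B C : {poly F}), A != 0 /\
    forall k : int, pmul_series A (smul s s) k + pmul_series B s k + pcoef C k = 0.

Definition cantor_letter (p : nat) (n : 'F_p) (i : nat) : 'F_p :=
  if odd i then 0 else n * ('C(((p - 1) %/ 2)%N, i./2))%:R.

Definition cantor_word (p : nat) (n : 'F_p) : seq 'F_p := mkseq (cantor_letter n) p.

Definition cantor_morph (p : nat) (w : seq 'F_p) : seq 'F_p :=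
  flatten (map (@cantor_word p) w).

(* c_i = i-th letter of lim phi_p^n(1); phi_p^{i+1}(1) has length p^{i+1} > i
   and is a prefix of all later iterates. *)
Definition cantor_seq (p : nat) (i : nat) : 'F_p :=
  nth 0 (iter i.+1 (@cantor_morph p) [:: 1]) i.

(* Theta_p(t) = t^{-1} sum_i c_i t^{-i}: coefficient of t^{-m}. *)
Definition Theta (p : nat) : nat -> 'F_p :=
  fun m => if m is m'.+1 then cantor_seq p m' else 0.

From mathcomp Require Import all_boot all_order all_algebra all_field.
From mathcomp Require Import zify ring.
Set Implicit Arguments. Unset Strict Implicit. Unset Printing Implicit Defensive.
Import Order.TTheory GRing.Theory Num.Theory.
Local Open Scope ring_scope.

(* Read t^-1 as X and let F_n be the polynomial whose coefficient sequence is the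
   word phi_p^n(1). As phi_p replaces each letter x by the coefficients of
   x (1 + X^2)^((p-1)/2), in characteristic p we get
   F_(n+1) = F_n(X^p) (1 + X^2)^((p-1)/2) = F_n^p (1 + X^2)^((p-1)/2), and by induction
   F_n^2 (1 + X^2) = 1 + X^(2 p^n). Since X F_n agrees with Theta_p up to X^(p^n), this
   gives Theta_p^2 (1 + X^2) = X^2, i.e. (t^2 + 1) Theta_p^2 = 1. If Theta_p were
   rational we would have R Theta_p = U with polynomials R <> 0 and U in X, hence
   (R X)^2 = U^2 (1 + X^2), which is impossible: 1 + X^2 is not a square in F_p(X)
   for odd p. *)

Lemma Poly_cat (R : comNzRingType) (s t : seq R) :
  Poly (s ++ t) = Poly s + 'X^(size s) * Poly t.
Proof.
elim: s => [|x s IH] /=; first by rewrite add0r mul1r.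
by rewrite !cons_poly_def IH exprS; ring.
Qed.

Lemma size_1addX2 (R : nzRingType) : size (1 + 'X^2 : {poly R}) = 3%N.
Proof. by rewrite addrC -polyC1 size_XnaddC. Qed.

Lemma coef_1addX2_exp (R : nzRingType) m i :
  ((1 + 'X^2 : {poly R}) ^+ m)`_i = if odd i then 0 else 'C(m, i./2)%:R.
Proof.
elim: m i => [|m IH] i.
  by rewrite expr0 coefC; case: i => [|[|i]] //=; case: ifP.
rewrite exprSr mulrDr mulr1 coefD coefMXn IH.
case: i => [|[|i]] /=; [by rewrite !bin0 addr0 | by rewrite addr0 |].
rewrite ?subSS ?subn0 IH negbK.
by case: (odd i) => /=; rewrite ?addr0 // binS natrD addrC.
Qed.

Lemma smul_coefM (R : nzRingType) (a b : {poly R}) (s u : nat -> R) m :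
  (forall i, (i <= m)%N -> a`_i = s i) -> (forall i, (i <= m)%N -> b`_i = u i) ->
  smul s u m = (a * b)`_m.
Proof.
move=> Ea Eb; rewrite coefM; apply: eq_bigr => i _.
by rewrite Ea ?Eb ?leq_subr // -ltnS.
Qed.

Lemma pmul_series_Negz (R : nzRingType) (P : {poly R}) (s : nat -> R) m :
  pmul_series P s (Negz m) = \sum_(j < size P) P`_j * s (j + m.+1)%N.
Proof. by []. Qed.

Lemma pmul_series_1addX2 (R : nzRingType) (u : nat -> R) k :
  pmul_series (1 + 'X^2) u k =
    (if k <= 0 then u `|k|%N else 0) + (if k <= 2 then u `|2 - k|%N else 0).
Proof.
rewrite /pmul_series size_1addX2 !big_ord_recl big_ord0 /= !coefD !coef1 !coefXn /=.
by rewrite !(add0r, addr0, mul1r, mul0r) abszN.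
Qed.

Lemma rational_series_polyP (F : fieldType) (s : nat -> F) :
  is_rational_series s ->
  exists R U : {poly F}, R != 0 /\ forall m, smul (fun i => R`_i) s m = U`_m.
Proof.
move=> [P [Q [Q_neq0 EQ]]]; set d := size Q.
have d_gt0 : (0 < d)%N by rewrite size_poly_gt0.
pose R := \poly_(i < d) Q`_(d.-1 - i).
exists R, (\poly_(m < d) smul (fun i => R`_i) s m); split.
  have R0 : R`_0 = lead_coef Q by rewrite coef_poly d_gt0 subn0.
  by apply: contra_neq Q_neq0 => R_eq0; apply/eqP; rewrite -lead_coef_eq0 -R0 R_eq0 coef0.
move=> m; rewrite coef_poly; case: ltnP => // le_dm.
transitivity (pmul_series Q s (Negz (m - d))); last exact: EQ.
rewrite pmul_series_Negz.
transitivity (\sum_(i < d) R`_i * s (m - i)%N).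
  rewrite (big_ord_widen _ (fun i => R`_i * s (m - i)%N) (leqW le_dm)) [RHS]big_mkcond.
  by apply: eq_bigr => i _; rewrite coef_poly; case: ltnP; rewrite ?mul0r.
rewrite (reindex_inj rev_ord_inj); apply: eq_bigr => -[i lt_id] _ /=.
rewrite coef_poly ifT; last by lia.
by congr (Q`_ _ * s _); lia.
Qed.

Lemma size_sqr_mul_leq (R : nzRingType) (a b : {poly R}) :
  (size (a ^+ 2 * b)%R <= 2 * size a + size b)%N.
Proof.
rewrite expr2; apply: leq_trans (size_mul_leq _ _) _.
by have := size_mul_leq a a; lia.
Qed.

Lemma dvdp_Xn_coef (R : idomainType) n (q : {poly R}) :
  (forall i, (i < n)%N -> q`_i = 0) -> 'X^n %| q.
Proof.
move=> q_low; rewrite -(poly_take_drop n q) (_ : take_poly n q = 0) ?add0r ?dvdp_mull //.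
by apply/polyP => i; rewrite coef_take_poly coef0; case: ltnP => // /q_low.
Qed.

Lemma dvdp_Xn_size (R : idomainType) n (q : {poly R}) :
  'X^n %| q -> (size q <= n)%N -> q = 0.
Proof.
move=> dvd_q le_qn; apply/eqP; apply: contraTT le_qn => q_neq0.
by rewrite -ltnNge -(size_polyXn R) dvdp_leq.
Qed.

Section NonSquare.
Variable K : fieldType.
Hypothesis two_neq0 : 2%:R != 0 :> K.

Lemma nonsquare_1addX2_const (a : {poly K}) (c : K) :
  a ^+ 2 = c%:P ^+ 2 * (1 + 'X^2) -> c = 0.
Proof.
rewrite -rmorphXn /= => Ea; apply/eqP; apply: contraT => c_neq0.
have c2_neq0 : c ^+ 2 != 0 by rewrite expf_neq0.
have size_a : size a = 2%N.
  have := size_exp a 2; rewrite Ea size_Cmul // size_1addX2.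
  (* identifies the two structure instances under which [size a] occurs *)
  by move: (size a) => n; lia.
have a2 : a`_2 = 0 by rewrite nth_default ?size_a.
have coef_Ea i := congr1 (fun q : {poly K} => q`_i) Ea.
move: (coef_Ea 0%N) (coef_Ea 1%N) (coef_Ea 2%N).
rewrite /= !coefCM !coefD !coef1 !coefXn /= expr2 !coefM.
rewrite !big_ord_recl !big_ord0 /bump /= a2 !(mulr0, mul0r, addr0, add0r, mulr1).
move=> Ea0 Ea1 Ea2.
have : 2%:R * (a`_0 * a`_1) == 0 by rewrite mulr_natl mulr2n {2}mulrC Ea1.
rewrite mulf_eq0 (negPf two_neq0) mulf_eq0 /=.
by case/orP=> /eqP a_eq0; move: c2_neq0; [rewrite -Ea0 | rewrite -Ea2];
  rewrite a_eq0 mulr0 eqxx.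
Qed.

Lemma nonsquare_1addX2 (a b : {poly K}) : a ^+ 2 = b ^+ 2 * (1 + 'X^2) -> b = 0.
Proof.
move=> Eab; apply/eqP; apply: contraT => b_neq0.
set g := gcdp a b; set a1 := a %/ g; set b1 := b %/ g.
have g_neq0 : g != 0 by rewrite gcdp_eq0 negb_and b_neq0 orbT.
have Ea : a1 * g = a := divpK (dvdp_gcdl a b).
have Eb : b1 * g = b := divpK (dvdp_gcdr a b).
have coprime_ab1 : coprimep a1 b1 by rewrite coprimep_div_gcd // b_neq0 orbT.
have Eab1 : a1 ^+ 2 = b1 ^+ 2 * (1 + 'X^2).
  apply: (mulIf (expf_neq0 2 g_neq0)); rewrite -exprMn Ea Eab -Eb; ring.
have : b1 %| 1.
  have coprime_ba1 : coprimep b1 (a1 ^+ 2) by rewrite coprimep_expr // coprimep_sym.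
  by rewrite -(Gauss_dvdpl 1 coprime_ba1) mul1r Eab1 expr2 -mulrA dvdp_mulIl.
rewrite dvdp1 => /size_poly1P[c c_neq0 Eb1].
by move: Eab1; rewrite Eb1 => /nonsquare_1addX2_const/eqP; rewrite (negPf c_neq0).
Qed.

End NonSquare.

Section CantorWords.
Variable p : nat.
Hypothesis p_gt1 : (1 < p)%N.

Definition cantor_iter n : seq 'F_p := iter n (@cantor_morph p) [:: 1].

Lemma cantor_morph_cons (x : 'F_p) (s : seq 'F_p) :
  cantor_morph (x :: s) = cantor_word x ++ cantor_morph s.
Proof. by []. Qed.

Lemma cantor_morph_cat (s t : seq 'F_p) :
  cantor_morph (s ++ t) = cantor_morph s ++ cantor_morph t.
Proof. by rewrite /cantor_morph map_cat flatten_cat. Qed.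

Lemma size_cantor_morph (s : seq 'F_p) : size (cantor_morph s) = (p * size s)%N.
Proof.
elim: s => [|x s IH]; first by rewrite muln0.
by rewrite cantor_morph_cons size_cat IH size_mkseq mulnS.
Qed.

Lemma size_cantor_iter n : size (cantor_iter n) = (p ^ n)%N.
Proof. by elim: n => //= n IH; rewrite size_cantor_morph IH expnS. Qed.

Lemma prefix_cantor_morph (s t : seq 'F_p) :
  prefix s t -> prefix (cantor_morph s) (cantor_morph t).
Proof. by move=> /prefixP[r ->]; rewrite cantor_morph_cat prefix_prefix. Qed.

Lemma prefix_cantor_iter m n : (m <= n)%N -> prefix (cantor_iter m) (cantor_iter n).
Proof.
have prefix_succ k : prefix (cantor_iter k) (cantor_iter k.+1).
  elim: k => [|k IH]; last exact: prefix_cantor_morph.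
  have : nth 0 (cantor_word (1 : 'F_p)) 0 = 1.
    by rewrite nth_mkseq ?(ltnW p_gt1) // /cantor_letter /= bin0 mulr1.
  rewrite /cantor_iter /= cantor_morph_cons [cantor_morph _]/= cats0.
  by case: (cantor_word 1) => [|y w /= ->] //; rewrite eqxx prefix0s.
move=> /subnK <-; elim: (n - m)%N => [|k IH]; first exact: prefix_refl.
exact: prefix_trans IH (prefix_succ _).
Qed.

Lemma nth_cantor_iter n i : (i < p ^ n)%N -> nth 0 (cantor_iter n) i = cantor_seq p i.
Proof.
have nth_prefix (s t : seq 'F_p) : prefix s t -> (i < size s)%N -> nth 0 s i = nth 0 t i.
  by move=> /prefixP[r ->] lt_is; rewrite nth_cat lt_is.
have lt_i : (i < p ^ i.+1)%N by rewrite ltnW // ltn_expl.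
move=> lt_in; rewrite /cantor_seq -/(cantor_iter i.+1).
have [le_ni|/ltnW le_in] := leqP n i.+1.
  by apply: nth_prefix (prefix_cantor_iter le_ni) _; rewrite size_cantor_iter.
by rewrite (nth_prefix _ _ (prefix_cantor_iter le_in)) // size_cantor_iter.
Qed.

End CantorWords.

Section CantorPolys.
Variable p : nat.
Hypotheses (p_pr : prime p) (p_odd : odd p).

Definition cantor_base : {poly 'F_p} := (1 + 'X^2) ^+ ((p - 1) %/ 2).

Definition cantor_poly n : {poly 'F_p} := Poly (cantor_iter p n).

Lemma double_half_pred_odd : (((p - 1) %/ 2) * 2).+1 = p.
Proof. by have := odd_double_half p; rewrite p_odd; lia. Qed.

Lemma Poly_cantor_word (x : 'F_p) : Poly (cantor_word x) = x%:P * cantor_base.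
Proof.
apply/polyP => i; rewrite coef_Poly coefCM coef_1addX2_exp.
have [lt_ip|le_pi] := ltnP i p.
  by rewrite nth_mkseq // /cantor_letter; case: (odd i); rewrite ?mulr0.
rewrite nth_default ?size_mkseq //; case: ifP => [|even_i]; first by rewrite mulr0.
have := odd_double_half i; rewrite even_i bin_small ?mulr0 //.
by have := double_half_pred_odd; lia.
Qed.

Lemma comp_polyXp_Fp (q : {poly 'F_p}) : q \Po 'X^p = q ^+ p.
Proof.
have pcharFpX : p \in [pchar {poly 'F_p}] by rewrite pchar_poly pchar_Fp.
have frobE (r : {poly 'F_p}) : r ^+ p = pFrobenius_aut pcharFpX r by [].
elim/poly_ind: q => [|q c IH]; first by rewrite comp_poly0 expr0n gtn_eqF ?prime_gt0.
have fermat : c ^+ p = c by have := expf_card c; rewrite card_Fp.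
rewrite comp_poly_MXaddC IH !frobE.
rewrite (rmorphD (pFrobenius_aut pcharFpX)) (rmorphM (pFrobenius_aut pcharFpX)).
by congr (_ + _); change (c%:P = c%:P ^+ p); rewrite -rmorphXn /= fermat.
Qed.

Lemma Poly_cantor_morph (w : seq 'F_p) :
  Poly (cantor_morph w) = Poly w ^+ p * cantor_base.
Proof.
rewrite -comp_polyXp_Fp; elim: w => [|x w IH]; first by rewrite comp_poly0 mul0r.
rewrite cantor_morph_cons Poly_cat Poly_cantor_word size_mkseq IH.
by rewrite [Poly (x :: w)]/= cons_poly_def comp_poly_MXaddC; ring.
Qed.

Lemma cantor_polyS n : cantor_poly n.+1 = cantor_poly n ^+ p * cantor_base.
Proof. exact: Poly_cantor_morph. Qed.

Lemma cantor_poly_sqr n : cantor_poly n ^+ 2 * (1 + 'X^2) = 1 + 'X^(2 * p ^ n).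
Proof.
elim: n => [|n IH].
  by rewrite /cantor_poly /= cons_poly_def mul0r add0r polyC1 expr1n mul1r.
have base_sqr : cantor_base ^+ 2 * (1 + 'X^2) = (1 + 'X^2) ^+ p.
  by rewrite -exprM -exprSr double_half_pred_odd.
rewrite cantor_polyS exprMn -mulrA base_sqr -exprM mulnC exprM -exprMn IH.
rewrite -comp_polyXp_Fp comp_polyD -polyC1 comp_polyC comp_Xn_poly -exprM expnSr.
by rewrite mulnCA [(p * _)%N]mulnC.
Qed.

End CantorPolys.

Section Theta.
Variable p : nat.
Hypotheses (p_pr : prime p) (p_odd : odd p).

Local Notation Theta2 := (smul (Theta p) (Theta p)).

Lemma coef_Theta n m : (m <= p ^ n)%N -> ('X * cantor_poly p n)`_m = Theta p m.
Proof.
rewrite coefXM; case: m => [//|m] lt_m /=.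
by rewrite coef_Poly nth_cantor_iter ?prime_gt1.
Qed.

Lemma coef_Theta2 n m : (m <= p ^ n)%N -> Theta2 m = (('X * cantor_poly p n) ^+ 2)`_m.
Proof.
by move=> le_m; rewrite expr2; apply: smul_coefM => i le_i; apply: coef_Theta; lia.
Qed.

Lemma Theta_poly_sqr_1addX2 n :
  ('X * cantor_poly p n) ^+ 2 * (1 + 'X^2) = 'X^2 + 'X^(2 * p ^ n + 2).
Proof. by rewrite exprMn -mulrA cantor_poly_sqr // mulrDr mulr1 -exprD addnC. Qed.

Lemma Theta2_small m : (m < 2)%N -> Theta2 m = 0.
Proof.
move=> lt_m2; rewrite (coef_Theta2 (n := 1)); last by have := prime_gt1 p_pr; lia.
by rewrite exprMn coefXnM lt_m2.
Qed.

Lemma Theta2_rec m : Theta2 m + Theta2 m.+2 = (m == 0)%:R.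
Proof.
have lt_m : (m.+2 < p ^ m.+2)%N by apply: ltn_expl; apply: prime_gt1.
rewrite !(coef_Theta2 (n := m.+2)) ?(ltnW lt_m) //; last by lia.
have := congr1 (fun q : {poly 'F_p} => q`_m.+2) (Theta_poly_sqr_1addX2 m.+2).
rewrite /= mulrDr mulr1 coefD coefMXn subn2 addrC => ->.
rewrite coefD !coefXn eqSS addrC (_ : (m.+2 == _) = false) ?add0r //; lia.
Qed.

Lemma Theta_quadratic : exists A B C : {poly 'F_p}, A != 0 /\
  forall k : int, pmul_series A Theta2 k + pmul_series B (Theta p) k + pcoef C k = 0.
Proof.
exists (1 + 'X^2), 0, (-1); split; first by rewrite -size_poly_eq0 size_1addX2.
move=> k; rewrite pmul_series_1addX2 /pmul_series size_poly0 big_ord0 addr0.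
case: k => [[|[|[|n]]]|m] /=; rewrite ?coefN ?coef1 /= ?(add0r, addr0, oppr0) //.
- by rewrite addn0 Theta2_rec subrr.
- exact: Theta2_small.
- exact: Theta2_small.
- exact: Theta2_rec m.+1.
Qed.

Lemma Fp_two_neq0 : 2%:R != 0 :> 'F_p.
Proof.
rewrite -(dvdn_pcharf (pchar_Fp p_pr)); apply: contraL p_odd => /(dvdn_leq (isT : 0 < 2)%N) le_p2.
by have -> : p = 2%N by have := prime_gt1 p_pr; lia.
Qed.

Lemma Theta_rational_sqr (R U : {poly 'F_p}) :
  (forall m, smul (fun i => R`_i) (Theta p) m = U`_m) ->
  R ^+ 2 * 'X^2 = U ^+ 2 * (1 + 'X^2).
Proof.
move=> RsU; pose n := (2 * (size R + size U) + 2)%N; pose N := (p ^ n)%N.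
have lt_nN : (n < N)%N by apply: ltn_expl; apply: prime_gt1.
pose T := 'X * cantor_poly p n.
have dvd_RTU : 'X^(N.+1) %| R * T - U.
  apply: dvdp_Xn_coef => i lt_iN; rewrite coefB -RsU (smul_coefM (a := R) (b := T)) ?subrr //.
  by move=> j le_ji; apply: coef_Theta; lia.
have E : R ^+ 2 * 'X^2 - U ^+ 2 * (1 + 'X^2)
    = (R * T - U) * ((R * T + U) * (1 + 'X^2)) - R ^+ 2 * 'X^(2 * N + 2).
  apply/eqP; rewrite -subr_eq0; apply/eqP.
  transitivity (R ^+ 2 * ('X^2 + 'X^(2 * N + 2) - T ^+ 2 * (1 + 'X^2))); first ring.
  by rewrite Theta_poly_sqr_1addX2 subrr mulr0.
apply/eqP; rewrite -subr_eq0; apply/eqP/(dvdp_Xn_size (n := N.+1)).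
  rewrite E; apply: dvdp_sub; first exact: dvdp_mulr dvd_RTU.
  by apply/dvdp_mull/dvdp_exp2l; lia.
have [le_RN le_UN] : (2 * size R + 3 <= N.+1)%N /\ (2 * size U + 3 <= N.+1)%N.
  by move: lt_nN; rewrite /N /n; set M := (p ^ _)%N; lia.
apply: leq_trans (size_polyD _ _) _; rewrite size_polyN geq_max; apply/andP; split.
- by apply: leq_trans (size_sqr_mul_leq R 'X^2) _; rewrite size_polyXn.
- by apply: leq_trans (size_sqr_mul_leq U (1 + 'X^2)) _; rewrite size_1addX2.
Qed.

Lemma Theta_irrational : ~ is_rational_series (Theta p).
Proof.
move=> /rational_series_polyP[R [U [R_neq0 /Theta_rational_sqr]]].
rewrite -exprMn => /[dup] /(nonsquare_1addX2 Fp_two_neq0) ->.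
rewrite expr0n mul0r => /eqP.
by rewrite expf_eq0 mulf_eq0 polyX_eq0 (negPf R_neq0).
Qed.

End Theta.

Theorem lemma5p8 (p : nat) (hp : prime p) (hodd : odd p) :
  quadratic_irrational (Theta p).
Proof. split; [exact: Theta_irrational | exact: Theta_quadratic]. Qed.
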